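(* For any valid $(\eta,\gamma)$, when WSU-UX is run with $K=2$ on the two-phase loss sequence, almost surely $$\sum_{t=1}^T\sum_{j\in[K]}\pi_{t,j}\hat\ell_{t,j}-\sum_{t=1}^T\hat\ell_{t,1}\ \ge\ \frac{\ln\pi_{T+1,1}+\ln K}{\eta}+\frac{\eta}{4}\sum_{t=1}^T\Bigl(\hat\ell_{t,1}-\sum_{j\in[K]}\pi_{t,j}\hat\ell_{t,j}\Bigr)^2.$$
   Context: WSU-UX. Fix integers $K\ge 2$ and $T\ge 1$ and hyperparameters $\eta,\gamma$. The pair $(\eta,\gamma)$ is called valid if $\eta,\gamma\in(0,1/2)$ and $\eta K/\gamma\le 1/2$. Given a fixed loss sequence $\ell_t\in[0,1]^K$, WSU-UX sets $\pi_{1,i}=1/K$ and in each round $t$: forms $\tilde\pi_{t,i}=(1-\gamma)\pi_{t,i}+\gamma/K$; draws $I_t$ with $\Pr(I_t=i\mid\mathcal F_{t-1})=\tilde\pi_{t,i}$; sets $\hat\ell_{t,i}=\ell_{t,i}\mathbf 1[I_t=i]/\tilde\pi_{t,i}$; and updates $\pi_{t+1,i}=\pi_{t,i}\bigl(1-\eta(\hat\ell_{t,i}-\sum_{j}\pi_{t,j}\hat\ell_{t,j})\bigr)$; $\mathcal F_t$ is the history generated by $I_1,\dots,I_t$. Two-phase loss sequence ($K=2$, $T$ a multiple of $100$, $T_1=T/100$): $\ell_{t,1}=1,\ell_{t,2}=0$ for $1\le t\le T_1$ and $\ell_{t,1}=0,\ell_{t,2}=1$ for $T_1<t\le T$. 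*)

From HB Require Import structures.
From mathcomp Require Import all_boot all_order all_algebra.
From mathcomp Require Import reals exp.
Set Implicit Arguments. Unset Strict Implicit. Unset Printing Implicit Defensive.
Import Order.TTheory GRing.Theory Num.Theory.
Local Open Scope ring_scope.

Section WSUUX.
Variables (R : realType) (K : nat) (eta gamma : R).
(* loss sequence: ell t i = loss of arm i at round t (t >= 1) *)
Variable ell : nat -> 'I_K -> R.
Variable I : nat -> 'I_K.

Definition valid : Prop :=
  [/\ 0 < eta < 1/2, 0 < gamma < 1/2 & eta * K%:R / gamma <= 1/2].

Definition mixw (p : {ffun 'I_K -> R}) (i : 'I_K) : R :=
  (1 - gamma) * p i + gamma / K%:R.

Definition lhatw (p : {ffun 'I_K -> R}) (t : nat) (i : 'I_K) : R :=
  ell t i * (I t == i)%:R / mixw p i.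

(* wsu n = pi_{n+1}; pi_1 = uniform *)
Fixpoint wsu (n : nat) : {ffun 'I_K -> R} :=
  match n with
  | 0 => [ffun _ => 1 / K%:R]
  | n'.+1 =>
      let p := wsu n' in
      let t := n'.+1 in
      [ffun i => p i * (1 - eta * (lhatw p t i - \sum_j p j * lhatw p t j))]
  end.

End WSUUX.
Definition wsu_pi (R : realType) (K : nat) (eta gamma : R) (ell : nat -> 'I_K -> R)
  (I : nat -> 'I_K) (t : nat) (i : 'I_K) : R := wsu eta gamma ell I t.-1 i.
Definition wsu_pitilde (R : realType) (K : nat) (eta gamma : R) (ell : nat -> 'I_K -> R)
  (I : nat -> 'I_K) (t : nat) (i : 'I_K) : R :=
  mixw gamma (wsu eta gamma ell I t.-1) i.
Definition wsu_lhat (R : realType) (K : nat) (eta gamma : R) (ell : nat -> 'I_K -> R)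
  (I : nat -> 'I_K) (t : nat) (i : 'I_K) : R :=
  lhatw gamma ell I (wsu eta gamma ell I t.-1) t i.

(* Two-phase loss sequence for K = 2, T1 = T/100.
   Arm 1 is ord0, arm 2 is ord1 (0-based indexing of 'I_2). *)
Definition two_phase {R : realType} (T : nat) (t : nat) (i : 'I_2) : R :=
  if (t <= T %/ 100)%N then (if i == ord0 then 1 else 0)
  else (if i == ord0 then 0 else 1).

(* Write x_t for the (estimated) loss of arm i at round t minus the estimated
   loss of the play.  Under a valid choice of (eta, gamma) every importance
   weighted estimate satisfies 0 <= eta lhat <= 1/2, hence |eta x_t| <= 1/2 and
   the multiplicative update pi_{t+1,i} = pi_{t,i} (1 - eta x_t) keeps pi_t a
   positive probability vector.  Telescoping ln pi_{t,i} from ln (1/K) and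
   using ln (1 - y) <= - y - y^2/4 for |y| <= 1/2 gives the bound, for every
   comparator arm i and any losses in [0,1]. *)
From HB Require Import structures.
From mathcomp Require Import all_boot all_order all_algebra.
From mathcomp Require Import reals exp.
From mathcomp Require Import ring lra.
Set Implicit Arguments. Unset Strict Implicit. Unset Printing Implicit Defensive.
Import Order.TTheory GRing.Theory Num.Theory.
Local Open Scope ring_scope.

(* ln (1 - y) <= z follows from 1 - y <= (1 + z/4)^4 <= expR z. *)
Lemma subr1_le_pow4 (R : realFieldType) (y : R) : -1/2 <= y <= 1/2 ->
  1 - y <= (1 + (- y - y ^+ 2 / 4%:R) / 4%:R) ^+ 4.
Proof.
move=> /andP[y_ge y_le]; rewrite -subr_ge0.
have -> : (1 + (- y - y ^+ 2 / 4%:R) / 4%:R) ^+ 4 - (1 - y) =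
  y ^+ 2 * (1/8%:R + y/8%:R - 5%:R * y ^+ 2/256%:R - y ^+ 3/128%:R
            + y ^+ 4/2048%:R + y ^+ 5/4096%:R + y ^+ 6/65536%:R) by field.
apply: mulr_ge0; first exact: sqr_ge0.
have y2 : 0 <= y ^+ 2 <= 1/4 by apply/andP; split; [exact: sqr_ge0 | nra].
have y3 : -1/8 <= y ^+ 3 <= 1/8 by apply/andP; split; nra.
have y4 : 0 <= y ^+ 4 <= 1/16 by apply/andP; split; nra.
have y5 : -1/32 <= y ^+ 5 <= 1/32 by apply/andP; split; nra.
have y6 : 0 <= y ^+ 6 <= 1/64 by apply/andP; split; nra.
lra.
Qed.

Lemma ln1B_le (R : realType) (y : R) : -1/2 <= y <= 1/2 ->
  ln (1 - y) <= - y - y ^+ 2 / 4%:R.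
Proof.
move=> y_bd; have /andP[y_ge y_le] := y_bd.
have base_gt0 : 0 < 1 + (- y - y ^+ 2 / 4%:R) / 4%:R by nra.
rewrite -[X in _ <= X]expRK ler_ln ?posrE ?expR_gt0 //; last by lra.
apply: (le_trans (subr1_le_pow4 y_bd)).
rewrite -[X in _ <= _ X](mulfVK (_ : 4%:R != 0 :> R)) ?pnatr_eq0 //.
rewrite expRM_natr; apply: lerXn2r; rewrite ?nnegrE ?expR_ge0 ?(ltW base_gt0) //.
exact: expR_ge1Dx.
Qed.

Section WSUUXRegret.
Variables (R : realType) (K : nat) (eta gamma : R).
Variables (ell : nat -> 'I_K -> R) (I : nat -> 'I_K).
Hypothesis eta_gamma_valid : valid K eta gamma.
Hypothesis ell_bd : forall t i, 0 <= ell t i <= 1.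

Lemma eta_lhatw_bounds (p : {ffun 'I_K -> R}) t i : 0 <= p i ->
  0 <= eta * lhatw gamma ell I p t i <= 1/2.
Proof.
move=> p_ge0; case: eta_gamma_valid => /andP[eta_gt0 _] /andP[gamma_gt0 gamma_lt] ratio.
have K_gt0 : 0 < K%:R :> R by rewrite ltr0n (leq_ltn_trans (leq0n i) (ltn_ord i)).
have mix_ge : gamma / K%:R <= mixw gamma p i.
  by rewrite /mixw lerDr mulr_ge0 // subr_ge0; lra.
have mix_gt0 : 0 < mixw gamma p i by apply: lt_le_trans mix_ge; rewrite divr_gt0.
have /andP[a_ge0 a_le1] : 0 <= ell t i * (I t == i)%:R <= 1.
  by case: (I t == i); rewrite ?mulr1 ?mulr0 ?lexx ?ler01 //; exact: ell_bd.
rewrite /lhatw mulr_ge0 ?divr_ge0 ?(ltW eta_gt0) ?(ltW mix_gt0) //=.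
apply: le_trans ratio; rewrite -[eta * _ / _]mulrA ler_pM2l // ler_pdivrMr //.
apply: le_trans a_le1 _.
by rewrite mulrC -ler_pdivrMr ?divr_gt0 // div1r invf_div.
Qed.

Let p n := wsu eta gamma ell I n.
Let lh n i := lhatw gamma ell I (p n) n.+1 i.
Let avg n := \sum_(j < K) p n j * lh n j.
Let x n i := lh n i - avg n.

Lemma wsuS n i : p n.+1 i = p n i * (1 - eta * x n i).
Proof. by rewrite /p /= ffunE. Qed.

Lemma eta_avg_bounds n : (forall j, 0 <= p n j) -> \sum_j p n j = 1 ->
  0 <= eta * avg n <= 1/2.
Proof.
move=> p_ge0 p_sum1; rewrite /avg mulr_sumr.
have term j : 0 <= eta * (p n j * lh n j) <= p n j * (1/2).
  rewrite mulrCA; have /andP[l_ge0 l_le] := eta_lhatw_bounds n.+1 (p_ge0 j).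
  by rewrite mulr_ge0 //= ler_wpM2l.
apply/andP; split; first by apply: sumr_ge0 => j _; case/andP: (term j).
apply: le_trans (ler_sum _ (fun j _ => proj2 (andP (term j)))) _.
by rewrite -mulr_suml p_sum1; lra.
Qed.

Lemma eta_x_bounds n i : (forall j, 0 <= p n j) -> \sum_j p n j = 1 ->
  -1/2 <= eta * x n i <= 1/2.
Proof.
move=> p_ge0 p_sum1.
have /andP[l_ge0 l_le] := eta_lhatw_bounds n.+1 (p_ge0 i).
have /andP[a_ge0 a_le] := eta_avg_bounds p_ge0 p_sum1.
rewrite /x mulrBr; apply/andP; split; rewrite /lh in l_ge0 l_le *; lra.
Qed.

Lemma wsu_simplex n : (0 < K)%N ->
  (forall i, 0 < p n i) /\ \sum_i p n i = 1.
Proof.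
move=> K_gt0; elim: n => [|n [p_gt0 p_sum1]].
  rewrite /p /=; split=> [i|]; first by rewrite ffunE divr_gt0 ?ltr0n.
  rewrite (eq_bigr _ (fun i _ => ffunE _ i)) sumr_const card_ord.
  by rewrite -[_ *+ K]mulr_natl div1r mulfV // pnatr_eq0 -lt0n.
have p_ge0 j : 0 <= p n j by apply: ltW.
split=> [i|].
  have /andP[_ ex_le] := eta_x_bounds i p_ge0 p_sum1.
  by rewrite wsuS mulr_gt0 // subr_gt0 (le_lt_trans ex_le) //; lra.
have step i : p n.+1 i = p n i * (1 + eta * avg n) - eta * (p n i * lh n i).
  by rewrite wsuS /x; ring.
rewrite (eq_bigr _ (fun i _ => step i)) sumrB -mulr_suml -mulr_sumr p_sum1.
by rewrite -/(avg n); ring.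
Qed.

Lemma ln_wsu_le n i : (0 < K)%N ->
  ln (p n i) + ln K%:R <=
    - (eta * \sum_(t < n) x t i) - eta ^+ 2 / 4%:R * \sum_(t < n) x t i ^+ 2.
Proof.
move=> K_gt0; elim: n => [|n IHn].
  rewrite /p /= ffunE !big_ord0 !mulr0 oppr0 addr0.
  by rewrite -lnM ?posrE ?divr_gt0 ?ltr0n // mul1r mulVf ?pnatr_eq0 -?lt0n ?ln1.
have [p_gt0 p_sum1] := wsu_simplex n K_gt0.
have ex_bd := eta_x_bounds i (fun j => ltW (p_gt0 j)) p_sum1.
have fac_gt0 : 0 < 1 - eta * x n i by case/andP: ex_bd => _ ?; lra.
rewrite wsuS lnM ?posrE // !big_ord_recr /=.
have := ln1B_le ex_bd; rewrite exprMn; lra.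
Qed.

Lemma wsu_regret_lower_bound n i : (0 < K)%N ->
  \sum_(t < n) avg t - \sum_(t < n) lh t i >=
    (ln (p n i) + ln K%:R) / eta + eta / 4%:R * \sum_(t < n) x t i ^+ 2.
Proof.
move=> K_gt0; have := ln_wsu_le n i K_gt0.
case: eta_gamma_valid => /andP[eta_gt0 _] _ _.
rewrite /x sumrB; set L := ln _ + _; set Q := \sum_(t < n) (_ - _) ^+ 2.
set S := \sum_(t < n) avg t - _ => ln_le.
have -> : L / eta + eta / 4%:R * Q = (L + eta ^+ 2 / 4%:R * Q) / eta.
  by field; rewrite gt_eqF.
rewrite ler_pdivrMr // [S * eta]mulrC -lerBrDr.
by rewrite -mulrN opprB -/S in ln_le.
Qed.

End WSUUXRegret.

Theorem mainTheorem8 (R : realType) (T : nat) (eta gamma : R)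
    (I : nat -> 'I_2) :
  (0 < T)%N -> (100 %| T)%N ->
  @valid R 2 eta gamma ->
  0 < \prod_(1 <= t < T.+1) wsu_pitilde eta gamma (two_phase T) I t (I t) ->
  let ph := wsu_pi eta gamma (two_phase T) I in
  let lh := wsu_lhat eta gamma (two_phase T) I in
  \sum_(1 <= t < T.+1) \sum_(j < 2) ph t j * lh t j
    - \sum_(1 <= t < T.+1) lh t ord0
  >= (ln (ph T.+1 ord0) + ln 2%:R) / eta
     + eta / 4%:R * \sum_(1 <= t < T.+1)
         (lh t ord0 - \sum_(j < 2) ph t j * lh t j) ^+ 2.
Proof.
move=> _ _ valid_eg _ /=.
have loss_bd t i : 0 <= @two_phase R T t i <= 1.
  by rewrite /two_phase; case: ifP => _; case: ifP => _; rewrite ?lexx ?ler01.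
rewrite !big_add1 /= !big_mkord /wsu_pi /wsu_lhat /=.
exact: wsu_regret_lower_bound valid_eg loss_bd T ord0 isT.
Qed.
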